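(* For every $i\in\{0,\dots,m-1\}$ and every real $B$ with $B_i\le B\le\kappa B_{i+1}$, $$\Lambda_{B,\,mB\beta^{-1}}=\langle \operatorname{pr}(b_1),\dots,\operatorname{pr}(b_i)\rangle .$$
   Context: Let $m\ge2$ and $1\le p\le m$ be integers and $P\in\mathbb{R}^{m\times p}$. Vectors of $\mathbb{Z}^m$, $\mathbb{R}^m$ are row vectors and all norms $\|\cdot\|$ are Euclidean. Let $\Lambda=\{x\in\mathbb{Z}^m : xP=0\}$. For $B,\varepsilon>0$, $\Lambda_{B,\varepsilon}$ denotes the subgroup of $\mathbb{Z}^m$ generated by $\{x\in\mathbb{Z}^m : \|x\|\le B,\ \|xP\|<\varepsilon\}$. Let $\beta>0$ and let $P_\beta\in\mathbb{Z}^{m\times p}$ be such that every entry of $P_\beta-\beta P$ lies in $[-\tfrac12,\tfrac12]$. Let $R\subset\mathbb{Z}^{p+m}$ be the lattice spanned by the rows of the $m\times(p+m)$ matrix $[\,P_\beta\mid I_m\,]$, and let $b_1,\dots,b_m$ be a basis of $R$ that is LLL-reduced (Lenstra–Lenstra–Lovász, with parameter $3/4$) and satisfies $\|b_1\|\le\dots\le\|b_m\|$. Set $B_0=0$, $B_i=\|b_i\|$ for $1\le i\le m$, $\kappa=m^{-1}2^{-(m+1)/2}$, and let $\operatorname{pr}\colon\mathbb{Z}^{p+m}\to\mathbb{Z}^m$ be the projection onto the last $m$ coordinates. *)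

(* Reals are modelled by an arbitrary Archimedean real closed
   field R (this includes the real numbers). *)
From HB Require Import structures.
From mathcomp Require Import all_boot all_order all_algebra.
Set Implicit Arguments. Unset Strict Implicit. Unset Printing Implicit Defensive.
Import Order.TTheory GRing.Theory Num.Theory.
Local Open Scope ring_scope.

Section Defs.
Variable R : archiRcfType.

Definition intmx (k n : nat) (x : 'M[int]_(k, n)) : 'M[R]_(k, n) :=
  map_mx (fun z : int => z%:~R) x.

Definition dotv (n : nat) (u v : 'rV[R]_n) : R := \sum_(j < n) u 0 j * v 0 j.
Definition rnorm (n : nat) (v : 'rV[R]_n) : R := Num.sqrt (dotv v v).
Definition znorm (n : nat) (x : 'rV[int]_n) : R := rnorm (intmx x).

Definition zspan (n : nat) (S : 'rV[int]_n -> Prop) (v : 'rV[int]_n) : Prop :=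
  exists (k : nat) (f : 'I_k -> 'rV[int]_n) (c : 'I_k -> int),
    (forall t, S (f t)) /\ v = \sum_(t < k) f t *~ c t.

Definition Lambda_Beps (m p : nat) (P : 'M[R]_(m, p)) (B eps : R)
  : 'rV[int]_m -> Prop :=
  zspan (fun x : 'rV[int]_m => znorm x <= B /\ rnorm (intmx x *m P) < eps).

Definition row_lattice (k n : nat) (A : 'M[int]_(k, n)) : 'rV[int]_n -> Prop :=
  zspan (fun v => exists i : 'I_k, v = row i A).

Definition lattice_basis (k n : nat) (Bm A : 'M[int]_(k, n)) : Prop :=
  (forall v, row_lattice Bm v <-> row_lattice A v) /\
  (forall c : 'rV[int]_k, c *m Bm = 0 -> c = 0).

Fixpoint gs_list (n : nat) (f : nat -> 'rV[R]_n) (k : nat) : seq 'rV[R]_n :=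
  match k with
  | 0 => [::]
  | k'.+1 =>
      let l := gs_list f k' in
      rcons l (f k' - \sum_(v <- l) (dotv (f k') v / dotv v v) *: v)
  end.

Definition gs_vec (n : nat) (f : nat -> 'rV[R]_n) (i : nat) : 'rV[R]_n :=
  nth 0 (gs_list f i.+1) i.

Definition gs_mu (n : nat) (f : nat -> 'rV[R]_n) (i j : nat) : R :=
  dotv (f i) (gs_vec f j) / dotv (gs_vec f j) (gs_vec f j).

(* the i-th row (0-indexed) of an integer matrix, as a real vector; 0 beyond *)
Definition rowf (k n : nat) (Bm : 'M[int]_(k, n)) (i : nat) : 'rV[R]_n :=
  if insub i is Some i' then intmx (row i' Bm) else 0.

Definition LLL_reduced (k n : nat) (Bm : 'M[int]_(k, n)) : Prop :=
  let f := rowf Bm in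
  (forall i j : nat, (j < i < k)%N -> `|gs_mu f i j| <= 2^-1) /\
  (forall i : nat, (0 < i < k)%N ->
     (3 / 4) * dotv (gs_vec f i.-1) (gs_vec f i.-1) <=
     dotv (gs_vec f i) (gs_vec f i)
     + gs_mu f i i.-1 ^+ 2 * dotv (gs_vec f i.-1) (gs_vec f i.-1)).

(* B_0 = 0, B_i = |b_i| (1-indexed) *)
Definition Bnorm (k n : nat) (Bm : 'M[int]_(k, n)) (i : nat) : R :=
  if i is i'.+1 then rnorm (rowf Bm i') else 0.

Definition kappa (m : nat) : R := (m%:R)^-1 / Num.sqrt (2 ^+ m.+1).

End Defs.

From HB Require Import structures.
From mathcomp Require Import all_boot all_order all_algebra.
From mathcomp Require Import ring lra zify.
Import Order.TTheory GRing.Theory Num.Theory.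
Local Open Scope ring_scope.
Set Implicit Arguments. Unset Strict Implicit. Unset Printing Implicit Defensive.

(* Every x in Z^m lifts to the lattice vector y = x [P_beta | I] of R, and
   conversely every vector of R is such a lift; pr(y) = x.  Since P_beta
   approximates beta P to within 1/2 entrywise, |x P_beta| and beta |x P| agree
   up to an error controlled by m |x| (rounding bounds).

   (inclusion of Lambda in the span) If |x| <= B and |x P| < m B / beta, then
   |y|^2 < 4 m^2 B^2 <= 2^{-(m-1)} B_{i+1}^2 by the choice of kappa.  On the
   other hand, Gram--Schmidt and the LLL conditions show that a lattice vector
   with a non-zero coordinate at some index >= i (0-based) has squared norm at
   least |b*_k|^2 >= 2^{-(m-1)} |b_k|^2 >= 2^{-(m-1)} B_{i+1}^2 for some k >= i.
   Hence y only involves b_1, ..., b_i, and so does x = pr(y).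
   (reverse inclusion) For j <= i, b_j = (z P_beta, z) with |b_j| <= B_i <= B,
   so |pr(b_j)| <= B, and the rounding bound gives |pr(b_j) P| < m B / beta. *)

Section InnerProduct.
Variable R : archiRcfType.
Variable n : nat.
Implicit Types u v w : 'rV[R]_n.

Lemma dotvC u v : dotv u v = dotv v u.
Proof. by apply: eq_bigr => j _; rewrite mulrC. Qed.

Lemma dotvDl u v w : dotv (u + v) w = dotv u w + dotv v w.
Proof. by rewrite /dotv -big_split; apply: eq_bigr => j _; rewrite !mxE mulrDl. Qed.

Lemma dotvDr u v w : dotv w (u + v) = dotv w u + dotv w v.
Proof. by rewrite dotvC dotvDl !(dotvC w). Qed.

Lemma dotvZl a u v : dotv (a *: u) v = a * dotv u v.
Proof. by rewrite /dotv mulr_sumr; apply: eq_bigr => j _; rewrite !mxE mulrA. Qed.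

Lemma dotvZr a u v : dotv u (a *: v) = a * dotv u v.
Proof. by rewrite dotvC dotvZl dotvC. Qed.

Lemma dotvNl u v : dotv (- u) v = - dotv u v.
Proof. by rewrite -scaleN1r dotvZl mulN1r. Qed.

Lemma dotvNr u v : dotv u (- v) = - dotv u v.
Proof. by rewrite dotvC dotvNl dotvC. Qed.

Lemma dotvBl u v w : dotv (u - v) w = dotv u w - dotv v w.
Proof. by rewrite dotvDl dotvNl. Qed.

Lemma dotv0l v : dotv 0 v = 0.
Proof. by rewrite /dotv big1 // => j _; rewrite mxE mul0r. Qed.

Lemma dotv0r v : dotv v 0 = 0.
Proof. by rewrite dotvC dotv0l. Qed.

Lemma dotv_suml I (r : seq I) (P : pred I) (F : I -> 'rV[R]_n) v :
  dotv (\sum_(t <- r | P t) F t) v = \sum_(t <- r | P t) dotv (F t) v.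
Proof.
elim/big_rec2: _ => [|t x y _ <-]; first by rewrite dotv0l.
by rewrite dotvDl.
Qed.

Lemma dotv_ge0 v : 0 <= dotv v v.
Proof. by apply: sumr_ge0 => j _; rewrite -expr2 sqr_ge0. Qed.

Lemma dotv_eq0 v : dotv v v = 0 -> v = 0.
Proof.
move=> /eqP; rewrite psumr_eq0 => [/allP hv|j _]; last by rewrite -expr2 sqr_ge0.
apply/rowP => j; have := hv j (mem_index_enum j).
by rewrite -expr2 sqrf_eq0 mxE => /eqP.
Qed.

Lemma dotv_add_le u v : dotv (u + v) (u + v) <= 2 * dotv u u + 2 * dotv v v.
Proof.
have := dotv_ge0 (u - v).
rewrite !dotvDl !dotvDr !dotvNl !dotvNr (dotvC v u); lra.
Qed.

Lemma rnorm_ge0 v : 0 <= rnorm v.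
Proof. exact: sqrtr_ge0. Qed.

Lemma rnorm_sq v : rnorm v ^+ 2 = dotv v v.
Proof. by rewrite /rnorm sqr_sqrtr // dotv_ge0. Qed.

Lemma rnorm_le u v : (rnorm u <= rnorm v) = (dotv u u <= dotv v v).
Proof. by rewrite /rnorm ler_sqrt // dotv_ge0. Qed.

Lemma rnorm_le_sq v c : 0 <= c -> (rnorm v <= c) = (dotv v v <= c ^+ 2).
Proof. by move=> hc; rewrite -rnorm_sq ler_pXn2r // nnegrE // rnorm_ge0. Qed.

Lemma rnorm_lt_sq v c : 0 <= c -> (rnorm v < c) = (dotv v v < c ^+ 2).
Proof. by move=> hc; rewrite -rnorm_sq ltr_pXn2r // nnegrE // rnorm_ge0. Qed.

End InnerProduct.

Lemma dotv_row_mx (R : archiRcfType) a b (u : 'rV[R]_a) (v : 'rV[R]_b) :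
  dotv (row_mx u v) (row_mx u v) = dotv u u + dotv v v.
Proof.
rewrite /dotv big_split_ord /=; congr (_ + _); apply: eq_bigr => j _.
  by rewrite row_mxEl.
by rewrite row_mxEr.
Qed.

Section GramSchmidt.
Variable R : archiRcfType.
Variable n : nat.
Variable f : nat -> 'rV[R]_n.
Notation g := (gs_vec f).
Notation G j := (dotv (g j) (g j)).

Lemma gs_size k : size (gs_list f k) = k.
Proof. by elim: k => [//|k IH] /=; rewrite size_rcons IH. Qed.

Lemma gs_nth k j : (j < k)%N -> nth 0 (gs_list f k) j = g j.
Proof.
elim: k => [//|k IH] hj; rewrite /gs_vec.
have [hjk|hjk] := ltnP j k; first by rewrite /= nth_rcons gs_size hjk IH.
by have -> : j = k by apply/eqP; rewrite eqn_leq hjk -ltnS hj.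
Qed.

Lemma gs_list_map k : gs_list f k = [seq g j | j <- iota 0 k].
Proof.
apply: (@eq_from_nth _ 0); first by rewrite size_map size_iota gs_size.
move=> j; rewrite gs_size => hj.
by rewrite gs_nth // (nth_map 0%N) ?size_iota // nth_iota.
Qed.

Lemma gs_eq k : g k = f k - \sum_(0 <= j < k) gs_mu f k j *: g j.
Proof.
rewrite [LHS]/gs_vec /= nth_rcons gs_size ltnn eqxx gs_list_map big_map.
by rewrite /index_iota subn0.
Qed.

Lemma gs_orth k j : (j < k)%N -> dotv (g k) (g j) = 0.
Proof.
elim/ltn_ind: k j => k IH j hjk.
have Ho l : (l < k)%N -> l != j -> dotv (g l) (g j) = 0.
  move=> hl hlj; have [hjl|hlj'] := ltnP j l; first exact: IH.
  rewrite dotvC; apply: IH; first exact: leq_ltn_trans hjk.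
  by rewrite ltn_neqAle hlj' andbT.
rewrite {1}gs_eq dotvBl dotv_suml big_mkord (bigD1 (Ordinal hjk)) //=.
rewrite big1 ?addr0 => [|l hl]; last by rewrite dotvZl Ho ?mulr0.
rewrite dotvZl /gs_mu; have [h0|h0] := eqVneq (G j) 0.
  by rewrite (dotv_eq0 h0) dotv0r mul0r mul0r subrr.
by rewrite divfK // subrr.
Qed.

Definition inspan k v := exists a : nat -> R, v = \sum_(0 <= l < k) a l *: g l.

Lemma inspan0 k : inspan k 0.
Proof. by exists (fun _ => 0); rewrite big1 // => l _; rewrite scale0r. Qed.

Lemma inspanD k u v : inspan k u -> inspan k v -> inspan k (u + v).
Proof.
move=> [a ->] [b ->]; exists (fun l => a l + b l).
by rewrite -big_split; apply: eq_bigr => l _; rewrite scalerDl.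
Qed.

Lemma inspanZ k c v : inspan k v -> inspan k (c *: v).
Proof.
move=> [a ->]; exists (fun l => c * a l).
by rewrite scaler_sumr; apply: eq_bigr => l _; rewrite scalerA.
Qed.

Lemma inspan_sum k I (r : seq I) (P : pred I) (F : I -> 'rV[R]_n) :
  (forall t, P t -> inspan k (F t)) -> inspan k (\sum_(t <- r | P t) F t).
Proof.
move=> h; elim/big_rec: _ => [|t x Pt hx]; first exact: inspan0.
by apply: inspanD => //; apply: h.
Qed.

Lemma inspan_mono k k' v : (k <= k')%N -> inspan k v -> inspan k' v.
Proof.
move=> hk [a ->]; exists (fun l => if (l < k)%N then a l else 0).
rewrite (big_cat_nat (leq0n k) hk) /= [X in _ = _ + X]big1_seq ?addr0.
  by apply: eq_big_nat => l /andP[_ ->].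
move=> l /andP[_]; rewrite mem_index_iota => /andP[hl _].
by rewrite ltnNge hl scale0r.
Qed.

Lemma inspan_g j k : (j < k)%N -> inspan k (g j).
Proof.
move=> hj; exists (fun l => (l == j)%:R).
rewrite (big_cat_nat (leq0n j) (ltnW hj)) /= [X in _ = _ + X](big_ltn hj).
rewrite eqxx scale1r big1_seq ?add0r => [|l]; last first.
  by rewrite mem_index_iota => /andP[_ /andP[_ hl]]; rewrite ltn_eqF // scale0r.
rewrite big1_seq ?addr0 // => l.
by rewrite mem_index_iota => /andP[_ /andP[hl _]]; rewrite gtn_eqF // scale0r.
Qed.

Lemma inspan_fg k : inspan k (f k - g k).
Proof.
rewrite (gs_eq k) opprB addrC subrK big_seq.
apply: inspan_sum => l; rewrite mem_index_iota => /andP[_ hl].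
exact/inspanZ/inspan_g.
Qed.

Lemma inspan_f j k : (j < k)%N -> inspan k (f j).
Proof.
move=> hj; rewrite -(subrK (g j) (f j)); apply: inspanD; last exact: inspan_g.
exact: inspan_mono (ltnW hj) (inspan_fg j).
Qed.

Lemma inspan_orth k v : inspan k v -> dotv (g k) v = 0.
Proof.
move=> [a ->]; rewrite dotvC dotv_suml big_seq big1 // => l.
by rewrite mem_index_iota => /andP[_ hl]; rewrite dotvZl dotvC gs_orth ?mulr0.
Qed.

Lemma pyth k c w : inspan k w ->
  dotv (c *: g k + w) (c *: g k + w) = c ^+ 2 * G k + dotv w w.
Proof.
move=> hw; rewrite !dotvDl !dotvDr !dotvZl !dotvZr (inspan_orth hw).
rewrite (dotvC w) (inspan_orth hw); ring.
Qed.

Lemma pyth_sum k (a : nat -> R) :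
  dotv (\sum_(0 <= l < k) a l *: g l) (\sum_(0 <= l < k) a l *: g l)
  = \sum_(0 <= l < k) a l ^+ 2 * G l.
Proof.
elim: k => [|k IH]; first by rewrite !big_geq // dotv0l.
by rewrite !big_nat_recr //= addrC pyth ?IH 1?addrC //; exists a.
Qed.

(* A combination of f 0, ..., f k whose last coefficient has square >= 1
   (e.g. a non-zero integer) has squared norm at least |g k|^2. *)
Lemma gs_last_coef_bound k (c : nat -> R) : 1 <= c k ^+ 2 ->
  G k <= dotv (\sum_(0 <= l < k.+1) c l *: f l) (\sum_(0 <= l < k.+1) c l *: f l).
Proof.
move=> hc; set w := \sum_(0 <= l < k) c l *: f l + c k *: (f k - g k).
have -> : \sum_(0 <= l < k.+1) c l *: f l = c k *: g k + w.
  by rewrite big_nat_recr //= /w scalerBr addrCA [c k *: g k + _]addrC subrK.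
rewrite pyth; last first.
  apply: inspanD; last exact/inspanZ/inspan_fg.
  rewrite big_seq; apply: inspan_sum => l; rewrite mem_index_iota => /andP[_ hl].
  exact/inspanZ/inspan_f.
have := dotv_ge0 (g k); have := dotv_ge0 w; nra.
Qed.

End GramSchmidt.

Lemma sum_inv_pow2 (R : archiRcfType) k :
  \sum_(0 <= l < k) ((2 : R) ^+ l)^-1 = 2 - 2 / 2 ^+ k.
Proof.
elim: k => [|k IH]; first by rewrite big_geq // expr0 divr1 subrr.
rewrite big_nat_recr //= IH exprS.
have hx : (2 : R) ^+ k != 0 by rewrite expf_eq0 pnatr_eq0 andbF.
by move: hx; set x := (2 : R) ^+ k => hx; field; rewrite hx.
Qed.

Section LLLBounds.
Variable R : archiRcfType.
Variables m N : nat.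
Variable Bm : 'M[int]_(m, N).
Hypothesis hLLL : LLL_reduced R Bm.
Notation f := (rowf R Bm).
Notation g := (gs_vec f).
Notation G j := (dotv (g j) (g j)).

Lemma lll_mu_sq i j : (j < i < m)%N -> gs_mu f i j ^+ 2 <= 4^-1.
Proof.
move=> h; have := hLLL.1 i j h => hm.
rewrite -real_normK ?num_real //.
have -> : (4 : R)^-1 = 2^-1 ^+ 2 by rewrite exprVn; congr (_^-1); ring.
by rewrite lerXn2r ?nnegrE ?normr_ge0 // invr_ge0 ler0n.
Qed.

(* Lovasz condition + size reduction: |g_{i-1}|^2 <= 2 |g_i|^2 *)
Lemma lll_gs_half i : (0 < i < m)%N -> G i.-1 <= 2 * G i.
Proof.
move=> /andP[h0 him]; have := hLLL.2 i; rewrite h0 him => /(_ isT) hl.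
have hmu : gs_mu f i i.-1 ^+ 2 <= 4^-1 by apply: lll_mu_sq; rewrite prednK // leqnn.
have hG := dotv_ge0 (g i.-1).
have : gs_mu f i i.-1 ^+ 2 * G i.-1 <= 4^-1 * G i.-1 by apply: ler_wpM2r.
lra.
Qed.

Lemma lll_gs_growth l k : (l <= k < m)%N -> 2 ^+ l * G l <= 2 ^+ k * G k.
Proof.
elim: k => [|k IH] /andP[hlk hkm]; first by move: hlk; rewrite leqn0 => /eqP ->.
rewrite leq_eqVlt in hlk; case/orP: hlk => [/eqP -> //|hlk].
apply: le_trans (IH _) _; first by rewrite -ltnS hlk ltnW.
have := @lll_gs_half k.+1; rewrite /= hkm => /(_ isT) h.
by rewrite exprS -mulrA mulrCA; apply: ler_wpM2l => //; exact: exprn_ge0.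
Qed.

Lemma lll_row_bound k : (k < m)%N -> dotv (f k) (f k) <= 2 ^+ k * G k.
Proof.
move=> hk.
have -> : f k = 1 *: g k + \sum_(0 <= l < k) gs_mu f k l *: g l.
  by rewrite scale1r (gs_eq f k) subrK.
rewrite pyth; last by exists (gs_mu f k).
rewrite pyth_sum expr1n mul1r.
have hG : 0 <= G k := dotv_ge0 _.
have hb : \sum_(0 <= l < k) gs_mu f k l ^+ 2 * G l <=
          \sum_(0 <= l < k) 4^-1 * (2 ^+ k * G k) * ((2 : R) ^+ l)^-1.
  rewrite big_seq [X in _ <= X]big_seq; apply: ler_sum => l.
  rewrite mem_index_iota => /andP[_ hl].
  have h1 : gs_mu f k l ^+ 2 * G l <= 4^-1 * G l.
    by apply: ler_wpM2r; [exact: dotv_ge0|apply: lll_mu_sq; rewrite hl hk].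
  apply: le_trans h1 _; rewrite -mulrA ler_wpM2l // ?invr_ge0 ?ler0n //.
  rewrite ler_pdivlMr ?exprn_gt0 // mulrC.
  by apply: lll_gs_growth; rewrite (ltnW hl) hk.
rewrite -mulr_sumr sum_inv_pow2 in hb.
have hx0 : (2 : R) ^+ k != 0 by rewrite expf_eq0 pnatr_eq0 andbF.
have E : 4^-1 * (2 ^+ k * G k) * (2 - 2 / 2 ^+ k) =
          2^-1 * (2 ^+ k * G k) - 2^-1 * G k :> R by field.
rewrite E in hb.
have hx : 1 <= (2 : R) ^+ k by rewrite exprn_ege1 // ler1n.
move: hb hx; set X := 2 ^+ k; nra.
Qed.

End LLLBounds.

Section ZSpan.
Variable n : nat.
Implicit Types S T : 'rV[int]_n -> Prop.

Lemma zspan_ind S (Q : 'rV[int]_n -> Prop) :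
  Q 0 -> (forall u v, Q u -> Q v -> Q (u + v)) ->
  (forall x z, S x -> Q (x *~ z)) -> forall v, zspan S v -> Q v.
Proof.
move=> h0 hD hS v [k [f [c [hf ->]]]].
by elim/big_rec: _ => [//|t x _ hx]; apply: hD => //; exact: hS.
Qed.

Lemma zspan0 S : zspan S 0.
Proof. by exists 0%N, (fun _ => 0), (fun _ => 0); split => [[]//|]; rewrite big_ord0. Qed.

Lemma zspan_elem S x : S x -> zspan S x.
Proof. by move=> hx; exists 1%N, (fun _ => x), (fun _ => 1); rewrite big_ord1 mulr1z. Qed.

Lemma zspanD S u v : zspan S u -> zspan S v -> zspan S (u + v).
Proof.
move=> [k1 [f1 [c1 [h1 ->]]]] [k2 [f2 [c2 [h2 ->]]]].
exists (k1 + k2)%N,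
  (fun t => match split t with inl a => f1 a | inr b => f2 b end),
  (fun t => match split t with inl a => c1 a | inr b => c2 b end).
split; first by move=> t; case: (split t).
rewrite big_split_ord /=; congr (_ + _); apply: eq_bigr => t _.
  by rewrite (unsplitK (inl t)).
by rewrite (unsplitK (inr t)).
Qed.

Lemma zspanZ S v z : zspan S v -> zspan S (v *~ z).
Proof.
move=> [k [f [c [h ->]]]]; exists k, f, (fun t => c t * z); split => //.
by rewrite mulrz_suml; apply: eq_bigr => t _; rewrite mulrzA.
Qed.

Lemma zspan_sub S T v : (forall x, S x -> zspan T x) -> zspan S v -> zspan T v.
Proof.
move=> hST; apply: zspan_ind; [exact: zspan0|exact: zspanD|].
by move=> x z hx; apply/zspanZ/hST.
Qed.

Lemma zspan_mono S T v : (forall x, S x -> T x) -> zspan S v -> zspan T v.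
Proof. by move=> hST; apply: zspan_sub => x /hST /zspan_elem. Qed.

End ZSpan.

Lemma row_latticeP k n (A : 'M[int]_(k, n)) v :
  row_lattice A v <-> exists c : 'rV[int]_k, v = c *m A.
Proof.
split.
  apply: (@zspan_ind _ _ (fun v => exists c : 'rV[int]_k, v = c *m A)).
  - by exists 0; rewrite mul0mx.
  - by move=> u w [c1 ->] [c2 ->]; exists (c1 + c2); rewrite mulmxDl.
  - move=> x z [i ->]; exists ('e_i *~ z).
    by rewrite -!scaler_int -scalemxAl -rowE.
move=> [c ->]; exists k, (fun t => row t A), (fun t => c 0 t); split.
  by move=> t; exists t.
by rewrite mulmx_sum_row; apply: eq_bigr => t _; rewrite -scaler_int intz.
Qed.

Lemma intmxM (R : archiRcfType) k n q (a : 'M[int]_(k, n)) (b : 'M[int]_(n, q)) :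
  intmx R (a *m b) = intmx R a *m intmx R b.
Proof.
apply/matrixP => r s; rewrite !mxE rmorph_sum; apply: eq_bigr => t _.
by rewrite !mxE rmorphM.
Qed.

Lemma intmx_row_mx (R : archiRcfType) a b (u : 'rV[int]_a) (v : 'rV[int]_b) :
  intmx R (row_mx u v) = row_mx (intmx R u) (intmx R v).
Proof. exact: map_row_mx. Qed.

Section LatticeLowerBound.
Variable R : archiRcfType.
Variables m N : nat.
Variable Bm : 'M[int]_(m, N).
Notation f := (rowf R Bm).
Notation g := (gs_vec f).
Notation G j := (dotv (g j) (g j)).

Lemma rowfE (j : 'I_m) : f j = intmx R (row j Bm).
Proof. by rewrite /rowf valK. Qed.

Lemma intmx_comb (d : 'rV[int]_m) :
  intmx R (d *m Bm) = \sum_(j < m) (d 0 j)%:~R *: f j.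
Proof.
rewrite intmxM mulmx_sum_row; apply: eq_bigr => j _.
by rewrite rowfE /intmx map_row mxE.
Qed.

(* Taking k maximal with a non-zero coefficient, gs_last_coef_bound applies. *)
Lemma lattice_gs_lower_bound (d : 'rV[int]_m) (i : nat) :
  (exists j : 'I_m, (i <= j)%N && (d 0 j != 0)) ->
  exists2 k, (i <= k < m)%N &
    G k <= dotv (intmx R (d *m Bm)) (intmx R (d *m Bm)).
Proof.
move=> [j0 hj0].
pose cf (n : nat) : int := if insub n is Some j then d 0 j else 0.
have cfE (j : 'I_m) : cf j = d 0 j by rewrite /cf valK.
pose nonzero_after_i n := (i <= n < m)%N && (cf n != 0).
have ex_nz : exists n, nonzero_after_i n.
  by exists j0; rewrite /nonzero_after_i cfE ltn_ord andbT.
have nz_bounded n : nonzero_after_i n -> (n <= m)%N by move=> /andP[/andP[_ /ltnW]].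
case: (ex_maxnP ex_nz nz_bounded) => k /andP[/andP[hik hkm] hk] kmax.
exists k; first by rewrite hik hkm.
have tail n : (k < n)%N -> cf n = 0.
  move=> hn; case: (ltnP n m) => [hnm|hmn]; last by rewrite /cf insubF // ltnNge hmn.
  apply/eqP/negPn/negP => hc.
  have /kmax : nonzero_after_i n by rewrite /nonzero_after_i hc hnm (leq_trans hik (ltnW hn)).
  by rewrite leqNgt hn.
have -> : intmx R (d *m Bm) = \sum_(0 <= n < k.+1) (cf n)%:~R *: f n.
  rewrite intmx_comb (_ : \sum_(j < m) _ = \sum_(0 <= n < m) (cf n)%:~R *: f n).
    rewrite (big_cat_nat (leq0n k.+1) hkm) /= [X in _ + X]big1_seq ?addr0 // => n.
    by rewrite mem_index_iota => /andP[_ /andP[hn _]]; rewrite tail // mulr0z scale0r.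
  by rewrite big_mkord; apply: eq_bigr => j _; rewrite cfE.
apply: gs_last_coef_bound; rewrite -rmorphXn /= ler1z.
by move: (cf k) hk => z hz; nia.
Qed.

Hypothesis hLLL : LLL_reduced R Bm.
Hypothesis hsorted : forall i j : 'I_m, (i <= j)%N ->
  rnorm (intmx R (row i Bm)) <= rnorm (intmx R (row j Bm)).

Lemma lattice_long_vector (d : 'rV[int]_m) (i : nat) : (i < m)%N ->
  (exists j : 'I_m, (i <= j)%N && (d 0 j != 0)) ->
  dotv (f i) (f i) <= 2 ^+ m.-1 * dotv (intmx R (d *m Bm)) (intmx R (d *m Bm)).
Proof.
move=> hi /lattice_gs_lower_bound [k /andP[hik hkm] hGk].
have hfi : dotv (f i) (f i) <= dotv (f k) (f k).
  by rewrite (rowfE (Ordinal hi)) (rowfE (Ordinal hkm)) -rnorm_le; apply: hsorted.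
have h2k : (2 : R) ^+ k <= 2 ^+ m.-1 by rewrite ler_eXn2l ?ltr1n //; lia.
apply: (le_trans hfi); apply: (le_trans (lll_row_bound hLLL hkm)).
apply: le_trans (ler_wpM2r (dotv_ge0 _) h2k) _.
by apply: ler_wpM2l => //; apply: exprn_ge0.
Qed.

End LatticeLowerBound.

(* (sum_i a_i)^2 <= n sum_i a_i^2, from sum_{i,j} (a_i - a_j)^2 >= 0. *)
Lemma sqr_sum_le (R : archiRcfType) n (a : 'I_n -> R) :
  (\sum_(i < n) a i) ^+ 2 <= n%:R * \sum_(i < n) a i ^+ 2.
Proof.
set S := \sum_(i < n) a i; set Q := \sum_(i < n) a i ^+ 2.
have h : \sum_(i < n) \sum_(j < n) (a i - a j) ^+ 2 = 2 * (n%:R * Q) - 2 * S ^+ 2.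
  have -> : \sum_(i < n) \sum_(j < n) (a i - a j) ^+ 2 =
            \sum_(i < n) (n%:R * a i ^+ 2 + Q - 2 * a i * S).
    apply: eq_bigr => i _.
    have -> : \sum_(j < n) (a i - a j) ^+ 2 =
              \sum_(j < n) (a i ^+ 2 + a j ^+ 2 - 2 * a i * a j).
      by apply: eq_bigr => j _; ring.
    rewrite sumrB big_split /= sumr_const card_ord -/Q /S mulr_sumr.
    by congr (_ - _); rewrite mulr_natl.
  rewrite sumrB big_split /= -mulr_sumr -/Q sumr_const card_ord.
  by rewrite -mulr_suml -mulr_sumr -/S -mulr_natl; ring.
have : 0 <= \sum_(i < n) \sum_(j < n) (a i - a j) ^+ 2.
  by apply: sumr_ge0 => i _; apply: sumr_ge0 => j _; apply: sqr_ge0.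
rewrite h; lra.
Qed.

Lemma dotv_mulmx_small (R : archiRcfType) k q (u : 'rV[R]_k) (E : 'M[R]_(k, q)) :
  (forall i j, `|E i j| <= 2^-1) ->
  dotv (u *m E) (u *m E) <= (k * q)%:R / 4 * dotv u u.
Proof.
move=> hE.
have hcol j : ((u *m E) 0 j) ^+ 2 <= k%:R * (4^-1 * dotv u u).
  rewrite mxE; apply: le_trans (sqr_sum_le _) _.
  rewrite ler_wpM2l ?ler0n // /dotv mulr_sumr; apply: ler_sum => i _.
  rewrite exprMn -expr2 mulrC ler_wpM2r ?sqr_ge0 // -real_normK ?num_real //.
  have -> : (4 : R)^-1 = 2^-1 ^+ 2 by rewrite exprVn; congr (_^-1); ring.
  by rewrite lerXn2r ?nnegrE ?normr_ge0 // invr_ge0 ler0n.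
have -> : dotv (u *m E) (u *m E) = \sum_(j < q) ((u *m E) 0 j) ^+ 2.
  by apply: eq_bigr => j _; rewrite expr2.
apply: le_trans (ler_sum _ (fun j _ => hcol j)) _.
rewrite sumr_const card_ord natrM; lra.
Qed.

(* Rounding: P_beta = beta P + E with |E_ij| <= 1/2, so |u P_beta|^2 and
   beta^2 |u P|^2 bound each other up to m^2/2 |u|^2. *)
Section Rounding.
Variable R : archiRcfType.
Variables m p : nat.
Variable P : 'M[R]_(m, p).
Variable beta : R.
Variable Pbeta : 'M[int]_(m, p).
Hypothesis hpm : (p <= m)%N.
Hypothesis hPbeta : forall (i : 'I_m) (j : 'I_p),
  `|(Pbeta i j)%:~R - beta * P i j| <= 2^-1.

Lemma rounding_bounds (u : 'rV[R]_m) :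
  dotv (u *m intmx R Pbeta) (u *m intmx R Pbeta) <=
     2 * (beta ^+ 2 * dotv (u *m P) (u *m P)) + (m%:R ^+ 2 / 2) * dotv u u /\
  beta ^+ 2 * dotv (u *m P) (u *m P) <=
     2 * dotv (u *m intmx R Pbeta) (u *m intmx R Pbeta) + (m%:R ^+ 2 / 2) * dotv u u.
Proof.
pose E := intmx R Pbeta - beta *: P.
have hE : dotv (u *m E) (u *m E) <= m%:R ^+ 2 / 4 * dotv u u.
  apply: le_trans (dotv_mulmx_small u (_ : forall i j, `|E i j| <= 2^-1)) _.
    by move=> i j; rewrite /E !mxE.
  apply: ler_wpM2r; first exact: dotv_ge0.
  by rewrite ler_wpM2r ?invr_ge0 ?ler0n // natrM expr2 ler_wpM2l ?ler0n ?ler_nat.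
have hu := dotv_ge0 u.
have e1 : u *m intmx R Pbeta = beta *: (u *m P) + u *m E.
  by rewrite /E mulmxBr -scalemxAr addrC subrK.
have hs : dotv (beta *: (u *m P)) (beta *: (u *m P)) =
          beta ^+ 2 * dotv (u *m P) (u *m P).
  by rewrite dotvZl dotvZr mulrA expr2.
split; first by rewrite e1; apply: le_trans (dotv_add_le _ _) _; rewrite hs; lra.
rewrite -hs (_ : beta *: _ = u *m intmx R Pbeta + - (u *m E)); last by rewrite e1 addrK.
by apply: le_trans (dotv_add_le _ _) _; rewrite dotvNl dotvNr opprK; lra.
Qed.

End Rounding.

Lemma kappa_sq_bound (R : archiRcfType) m (b B : R) : (0 < m)%N ->
  0 <= B -> B <= kappa R m * b -> 2 ^+ m.+1 * (m%:R * B) ^+ 2 <= b ^+ 2.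
Proof.
move=> m_gt0 hB0 hB; set s := Num.sqrt ((2 : R) ^+ m.+1).
have hs : 0 < s by rewrite sqrtr_gt0 exprn_gt0.
have hm : 0 < m%:R :> R by rewrite ltr0n.
have hmBs : m%:R * B * s <= b.
  have -> : b = m%:R * (kappa R m * b) * s.
    by rewrite /kappa -/s; field; rewrite (gt_eqF hs) (gt_eqF hm).
  by rewrite ler_pM2r // ler_pM2l.
have hmBs0 : 0 <= m%:R * B * s by rewrite !mulr_ge0 // ?ltW.
have := hmBs; rewrite -(ler_pXn2r (n := 2)) ?nnegrE //; last exact: le_trans hmBs0 hmBs.
by rewrite exprMn sqr_sqrtr ?exprn_ge0 // mulrC.
Qed.

Lemma rsub_low_comb_in_span m a b (Bm : 'M[int]_(m, a + b)) (d : 'rV[int]_m)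
    (i : nat) (hi : (i <= m)%N) :
  (forall j : 'I_m, (i <= j)%N -> d 0 j = 0) ->
  zspan (fun v => exists j : 'I_m, (j < i)%N /\ v = rsubmx (row j Bm))
        (rsubmx (d *m Bm)).
Proof.
move=> d_tail; rewrite -mulmx_rsub mulmx_sum_row.
exists i, (fun t : 'I_i => rsubmx (row (widen_ord hi t) Bm)),
  (fun t => d 0 (widen_ord hi t)); split.
  by move=> t; exists (widen_ord hi t); split => //=; exact: ltn_ord.
rewrite (bigID (fun j : 'I_m => (j < i)%N)) /= [X in _ + X]big1 ?addr0; last first.
  by move=> j; rewrite -leqNgt => hj; rewrite d_tail // scale0r.
rewrite (big_ord_narrow hi); apply: eq_bigr => t _.
by rewrite -scaler_int intz; congr (_ *: _); apply/rowP => s; rewrite !mxE.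
Qed.

Section Lemma42.
Variable R : archiRcfType.
Variables m p : nat.
Variable P : 'M[R]_(m, p).
Variable beta : R.
Variable Pbeta : 'M[int]_(m, p).
Variable Bm : 'M[int]_(m, p + m).
Hypothesis hm : (2 <= m)%N.
Hypothesis hpm : (p <= m)%N.
Hypothesis hbeta : 0 < beta.
Hypothesis hPbeta : forall (i : 'I_m) (j : 'I_p),
  `|(Pbeta i j)%:~R - beta * P i j| <= 2^-1.
Hypothesis hbasis : lattice_basis Bm (row_mx Pbeta 1%:M).
Hypothesis hLLL : LLL_reduced R Bm.
Hypothesis hsorted : forall i j : 'I_m, (i <= j)%N ->
  rnorm (intmx R (row i Bm)) <= rnorm (intmx R (row j Bm)).
Notation f := (rowf R Bm).

Definition lift (x : 'rV[int]_m) : 'rV[int]_(p + m) := row_mx (x *m Pbeta) x.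

Lemma lift_in_lattice x : row_lattice Bm (lift x).
Proof. by apply/(proj1 hbasis)/row_latticeP; exists x; rewrite mul_mx_row mulmx1. Qed.

Lemma lattice_is_lift v : row_lattice Bm v -> v = lift (rsubmx v).
Proof.
by move=> /(proj1 hbasis)/row_latticeP [z ->]; rewrite mul_mx_row mulmx1 /lift row_mxKr.
Qed.

Lemma lift_sq_norm x : dotv (intmx R (lift x)) (intmx R (lift x)) =
  dotv (intmx R x *m intmx R Pbeta) (intmx R x *m intmx R Pbeta) +
  dotv (intmx R x) (intmx R x).
Proof. by rewrite /lift intmx_row_mx dotv_row_mx intmxM. Qed.

Lemma four_le_sqr_m : 4 <= m%:R ^+ 2 :> R.
Proof. by rewrite (_ : 4 = 2 ^+ 2 :> R) ?ler_pXn2r ?nnegrE ?ler0n ?ler_nat //; ring. Qed.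

Lemma short_lift x B : znorm R x <= B -> rnorm (intmx R x *m P) < m%:R * B / beta ->
  dotv (intmx R (lift x)) (intmx R (lift x)) < 4 * (m%:R * B) ^+ 2.
Proof.
move=> hxB hxP; rewrite lift_sq_norm; set ix := intmx R x in hxB hxP *.
have hB0 : 0 <= B := le_trans (rnorm_ge0 _) hxB.
have hx2 : dotv ix ix <= B ^+ 2 by rewrite -rnorm_le_sq.
have hxP2 : beta ^+ 2 * dotv (ix *m P) (ix *m P) < m%:R ^+ 2 * B ^+ 2.
  move: hxP; rewrite rnorm_lt_sq ?divr_ge0 ?mulr_ge0 ?ler0n ?(ltW hbeta) //.
  by rewrite expr_div_n ltr_pdivlMr ?exprn_gt0 // mulrC exprMn.
have [hPb _] := rounding_bounds hpm hPbeta ix.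
have hx2M : m%:R ^+ 2 / 2 * dotv ix ix <= m%:R ^+ 2 / 2 * B ^+ 2.
  by apply: ler_wpM2l; rewrite ?divr_ge0 ?sqr_ge0.
have hB2M : 4 * B ^+ 2 <= m%:R ^+ 2 * B ^+ 2 by rewrite ler_wpM2r ?sqr_ge0 ?four_le_sqr_m.
have := mulr_ge0 (sqr_ge0 (m%:R : R)) (sqr_ge0 B).
rewrite exprMn; lra.
Qed.

Lemma short_vector_in_span i (hi : (i < m)%N) B
    (hB2 : B <= kappa R m * Bnorm R Bm i.+1) x :
  znorm R x <= B -> rnorm (intmx R x *m P) < m%:R * B / beta ->
  zspan (fun v => exists j : 'I_m, (j < i)%N /\ v = rsubmx (row j Bm)) x.
Proof.
move=> hxB hxP; have hB0 : 0 <= B := le_trans (rnorm_ge0 _) hxB.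
have [d hd] := (row_latticeP Bm _).1 (lift_in_lattice x).
have -> : x = rsubmx (d *m Bm) by rewrite -hd /lift row_mxKr.
apply: rsub_low_comb_in_span (ltnW hi) _ => j hij.
apply/eqP/negPn/negP => hdj.
have hlong : dotv (f i) (f i) <=
    2 ^+ m.-1 * dotv (intmx R (lift x)) (intmx R (lift x)).
  by rewrite hd; apply: lattice_long_vector => //; exists j; rewrite hij hdj.
have hkappa := kappa_sq_bound (ltnW hm) hB0 hB2.
have h2 : (2 : R) ^+ m.+1 = 4 * 2 ^+ m.-1.
  by rewrite -{1}(prednK (ltnW hm)) !exprS; ring.
rewrite /= rnorm_sq h2 in hkappa.
have hX : 0 < (2 : R) ^+ m.-1 by rewrite exprn_gt0.
have := short_lift hxB hxP; rewrite -(ltr_pM2l hX); lra.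
Qed.

Lemma basis_row_sq_pos (j : 'I_m) :
  0 < dotv (intmx R (row j Bm)) (intmx R (row j Bm)).
Proof.
rewrite lt_def dotv_ge0 andbT; apply/eqP => /dotv_eq0 h0.
have : (delta_mx 0 j : 'rV[int]_m) *m Bm = 0.
  rewrite -rowE; apply/rowP => t; have := congr1 (fun M : 'rV[R]_(p + m) => M 0 t) h0.
  by rewrite !mxE => /eqP; rewrite intr_eq0 => /eqP ->.
by move=> /(proj2 hbasis) /rowP /(_ j); rewrite !mxE !eqxx.
Qed.

Lemma basis_row_short i (hi : (i < m)%N) B (hB1 : Bnorm R Bm i <= B)
    (j : 'I_m) (hji : (j < i)%N) :
  znorm R (rsubmx (row j Bm)) <= B /\
  rnorm (intmx R (rsubmx (row j Bm)) *m P) < m%:R * B / beta.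
Proof.
set z := rsubmx (row j Bm); set iz := intmx R z.
have hB0 : 0 <= B.
  by apply: le_trans hB1; case: (i) => [|i'] /=; [exact: lexx|exact: rnorm_ge0].
have hD : dotv (intmx R (row j Bm)) (intmx R (row j Bm)) =
          dotv (iz *m intmx R Pbeta) (iz *m intmx R Pbeta) + dotv iz iz.
  by rewrite {1 2}(lattice_is_lift (zspan_elem (ex_intro _ j erefl))) lift_sq_norm.
have hDB : dotv (intmx R (row j Bm)) (intmx R (row j Bm)) <= B ^+ 2.
  rewrite -rnorm_le_sq //; apply: le_trans hB1.
  case: (i) hi hji => [//|i'] hi hji /=.
  by rewrite (rowfE R Bm (Ordinal (ltnW hi))); apply: hsorted.
have hD0 := basis_row_sq_pos j.
have [_ hPb] := rounding_bounds hpm hPbeta iz.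
have hm2 := four_le_sqr_m.
have := dotv_ge0 (iz *m intmx R Pbeta); have := dotv_ge0 iz => hzz hz0.
split; first by rewrite /znorm rnorm_le_sq //; lra.
rewrite rnorm_lt_sq; last by rewrite divr_ge0 ?mulr_ge0 ?ler0n // ltW.
rewrite expr_div_n ltr_pdivlMr ?exprn_gt0 // mulrC exprMn; nra.
Qed.

End Lemma42.

Unset Implicit Arguments.
Set Strict Implicit.
Theorem lemma4p2 (R : archiRcfType) (m p : nat)
  (hm : (2 <= m)%N) (hp1 : (1 <= p)%N) (hpm : (p <= m)%N)
  (P : 'M[R]_(m, p)) (beta : R) (hbeta : 0 < beta)
  (Pbeta : 'M[int]_(m, p))
  (hPbeta : forall (i : 'I_m) (j : 'I_p),
      `|(Pbeta i j)%:~R - beta * P i j| <= 2^-1)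
  (Bm : 'M[int]_(m, p + m))
  (hbasis : lattice_basis Bm (row_mx Pbeta 1%:M))
  (hLLL : LLL_reduced R Bm)
  (hsorted : forall i j : 'I_m, (i <= j)%N ->
      rnorm (intmx R (row i Bm)) <= rnorm (intmx R (row j Bm)))
  (i : nat) (hi : (i < m)%N) (B : R)
  (hB1 : Bnorm R Bm i <= B) (hB2 : B <= kappa R m * Bnorm R Bm i.+1) :
  forall x : 'rV[int]_m,
    Lambda_Beps P B (m%:R * B / beta) x <->
    zspan (fun v : 'rV[int]_m =>
             exists j : 'I_m, (j < i)%N /\ v = rsubmx (row j Bm)) x.
Proof.
move=> x; split.
- apply: zspan_sub => {}x [hxB hxP].
  exact: (short_vector_in_span hm hpm hbeta hPbeta hbasis hLLL hsorted hi hB2 hxB hxP).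
- apply: zspan_mono => {}x [j [hji ->]].
  exact: (basis_row_short hm hpm hbeta hPbeta hbasis hsorted hi hB1 hji).
Qed.
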